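(* Let $\mathbb{F}$ be a finite field. For every $k\in\mathbb{N}$ there exists a CMSO formula $\mathrm{Dep}(X,\langle Y^1\rangle,\dots,\langle Y^k\rangle)$ over $\Sigma_{\mathbb{F}}$ such that for every matrix $A$ over $\mathbb{F}$, every set $S$ of columns of $A$ and all virtual columns $\langle Q^1\rangle,\dots,\langle Q^k\rangle$ of $\mathcal{S}(A)$, the set $S$ is linearly dependent with respect to $v(\langle Q^1\rangle),\dots,v(\langle Q^k\rangle)$ if and only if $\mathcal{S}(A)\models\mathrm{Dep}(S,\langle Q^1\rangle,\dots,\langle Q^k\rangle)$.
   Context: $\Sigma_{\mathbb{F}}$ has unary symbols $R,C$ and binary symbols $\mathrm{Entry}_\alpha$ ($\alpha\in\mathbb{F}$). For a matrix $A$ with rows $r_1,\dots,r_m$, $\mathcal{S}(A)$ has universe rows $\cup$ columns, $R$ = rows, $C$ = columns, $\mathrm{Entry}_\alpha=\{(r,c):A(r,c)=\alpha\}$. CMSO is monadic second-order logic with predicates $\mathrm{mod}_{a,b}(X)$ meaning $|X|\equiv a\pmod b$. A virtual column is a family $\langle Q\rangle=\{Q_\alpha\}_{\alpha\in\mathbb{F}}$ of pairwise disjoint sets of rows covering all rows, with vector $v(\langle Q\rangle)\in\mathbb{F}^m$ whose $i$-th coordinate is $\alpha$ where $r_i\in Q_\alpha$; in formulas it is an $\mathbb{F}$-indexed tuple of set variables. A set $\{u_1,\dots,u_\ell\}$ of columns (vectors of $\mathbb{F}^m$) is dependent with respect to $v_1,\dots,v_k\in\mathbb{F}^m$ if there exist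 $\alpha_1,\dots,\alpha_\ell\in\mathbb{F}$, not all $0$, with $\sum_i\alpha_iu_i\in\mathrm{span}(v_1,\dots,v_k)$. *)

From HB Require Import structures.
From mathcomp Require Import all_boot all_order all_algebra.
Set Implicit Arguments. Unset Strict Implicit. Unset Printing Implicit Defensive.
Import GRing.Theory.
Local Open Scope ring_scope.

(* First-order variables and set variables are both indexed by nat
   (two separate name spaces). *)
Inductive cmso (F : Type) : Type :=
| CRow   (x : nat)
| CCol   (x : nat)
| CEntry (a : F) (x y : nat)
| CEq    (x y : nat)
| CIn    (x : nat) (X : nat)
| CMod   (a b : nat) (X : nat)
| CTrue
| CNot   (p : cmso F)
| CAnd   (p q : cmso F)
| COr    (p q : cmso F)
| CExV   (x : nat) (p : cmso F)
| CAllV  (x : nat) (p : cmso F)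
| CExS   (X : nat) (p : cmso F)
| CAllS  (X : nat) (p : cmso F).

Record sigma_struct (F : Type) := SigmaStruct {
  carrier : finType;
  s_R : pred carrier;
  s_C : pred carrier;
  s_Entry : F -> rel carrier }.

Definition upd {T : Type} (f : nat -> T) (x : nat) (v : T) : nat -> T :=
  fun y => if y == x then v else f y.

Fixpoint sat (F : Type) (M : sigma_struct F)
  (fo : nat -> carrier M) (so : nat -> {set carrier M}) (p : cmso F) : Prop :=
  match p with
  | CRow x => @s_R F M (fo x)
  | CCol x => @s_C F M (fo x)
  | CEntry a x y => @s_Entry F M a (fo x) (fo y)
  | CEq x y => fo x = fo y
  | CIn x X => fo x \in so X
  | CMod a b X => (#|so X| = a %[mod b])%N
  | CTrue => True
  | CNot q => ~ sat fo so q
  | CAnd q r => sat fo so q /\ sat fo so r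
  | COr q r => sat fo so q \/ sat fo so r
  | CExV x q => exists u : carrier M, sat (upd fo x u) so q
  | CAllV x q => forall u : carrier M, sat (upd fo x u) so q
  | CExS X q => exists U : {set carrier M}, sat fo (upd so X U) q
  | CAllS X q => forall U : {set carrier M}, sat fo (upd so X U) q
  end.

(* universe = rows (inl) + columns (inr) *)
Definition is_row {m n : nat} (u : ('I_m + 'I_n)%type) : bool :=
  if u is inl _ then true else false.
Definition is_col {m n : nat} (u : ('I_m + 'I_n)%type) : bool :=
  if u is inr _ then true else false.
Definition entry_rel (F : eqType) {m n : nat} (A : 'M[F]_(m, n)) (a : F)
  (u w : ('I_m + 'I_n)%type) : bool :=
  match u, w with
  | inl i, inr j => A i j == a
  | _, _ => false
  end.

Definition SA (F : eqType) (m n : nat) (A : 'M[F]_(m, n)) : sigma_struct F :=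
  @SigmaStruct F ('I_m + 'I_n)%type is_row is_col (entry_rel A).

Definition col_set {m n : nat} (S : {set 'I_n}) : {set ('I_m + 'I_n)%type} :=
  [set inr j | j in S].
Definition row_set {m n : nat} (Q : {set 'I_m}) : {set ('I_m + 'I_n)%type} :=
  [set inl i | i in Q].

Definition virtual_column (F : finFieldType) (m : nat) (Q : F -> {set 'I_m}) : Prop :=
  (forall a b : F, a != b -> [disjoint Q a & Q b]) /\
  (forall i : 'I_m, exists a : F, i \in Q a).

Definition vvec (F : finFieldType) (m : nat) (Q : F -> {set 'I_m}) : 'cV[F]_m :=
  \col_i (odflt 0 [pick a : F | i \in Q a]).

Definition dep_wrt (F : fieldType) (m n k : nat) (A : 'M[F]_(m, n))
  (S : {set 'I_n}) (v : 'I_k -> 'cV[F]_m) : Prop :=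
  exists c : 'I_n -> F,
    (exists j, j \in S /\ c j != 0) /\
    exists d : 'I_k -> F,
      \sum_(j in S) c j *: col j A = \sum_(i < k) d i *: v i.

(* Encoding of the free set variables of Dep(X, <Y^1>, ..., <Y^k>):
   X is set variable 0, and Y^i_a is set variable 1 + i*|F| + rank(a). *)
Definition var_X : nat := 0.
Definition var_Y (F : finType) (i : nat) (a : F) : nat :=
  (1 + i * #|F| + enum_rank a)%N.

From mathcomp Require Import all_boot all_order all_algebra.
From Stdlib Require Import Classical FunctionalExtensionality.
Set Implicit Arguments. Unset Strict Implicit. Unset Printing Implicit Defensive.
Import GRing.Theory.
Local Open Scope ring_scope.

(* A dependence  sum_(j in S) c_j col_j A = sum_i d_i v(Q^i)  is guessed by the
   formula: d by a finite disjunction, and c by the partition of S into the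
   classes C_a = {j | c_j = a}, which are set variables.  The equation is then
   checked row by row.  In row r its left side is
   sum_(a,e) a * e * |{j in C_a | A r j = e}|, and since #|F| = 0 in F only these
   cardinalities modulo #|F| matter, which the mod predicates express; the
   entries of the virtual columns in row r are read off from the sets Q^i_b
   containing r. *)

Section DerivedConnectives.
Variable F : Type.

Definition cfalse : cmso F := CNot (CTrue F).
Definition cimp (p q : cmso F) : cmso F := COr (CNot p) q.
Definition ciff (p q : cmso F) : cmso F := CAnd (cimp p q) (cimp q p).
Definition cbool (b : bool) : cmso F := if b then CTrue F else cfalse.

Definition bigCAnd (T : finType) (f : T -> cmso F) : cmso F :=
  foldr (fun t => CAnd (f t)) (CTrue F) (enum T).
Definition bigCOr (T : finType) (f : T -> cmso F) : cmso F :=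
  foldr (fun t => COr (f t)) cfalse (enum T).
Definition bigCOr_fun (I T : finType) (f : (I -> T) -> cmso F) : cmso F :=
  bigCOr (fun g : {ffun I -> T} => f g).

Definition exsets (T : finType) (var : T -> nat) (p : cmso F) : cmso F :=
  foldr (@CExS F) p (map var (enum T)).

Definition upd_fam (T : finType) (V : Type) (so : nat -> V) (var : T -> nat)
    (U : T -> V) : nat -> V :=
  fun x => if [pick t | var t == x] is Some t then U t else so x.

Lemma upd_fam_var (T : finType) V so (var : T -> nat) (U : T -> V) t :
  injective var -> upd_fam so var U (var t) = U t.
Proof.
move=> var_inj; rewrite /upd_fam; case: pickP => [t' /eqP /var_inj -> //|].
by move/(_ t); rewrite eqxx.
Qed.

Lemma upd_fam_fresh (T : finType) V so (var : T -> nat) (U : T -> V) x :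
  (forall t, var t != x) -> upd_fam so var U x = so x.
Proof.
by move=> fresh; rewrite /upd_fam; case: pickP => // t; rewrite (negbTE (fresh t)).
Qed.

Variable M : sigma_struct F.
Implicit Types (fo : nat -> carrier M) (so : nat -> {set carrier M}) (p q : cmso F).

Lemma sat_cimp fo so p q : sat fo so (cimp p q) <-> (sat fo so p -> sat fo so q).
Proof.
rewrite /cimp /=; split=> [[np|Hq] Hp|H] //.
by case: (classic (sat fo so p)) => Hp; [right; apply: H | left].
Qed.

Lemma sat_ciff fo so p q : sat fo so (ciff p q) <-> (sat fo so p <-> sat fo so q).
Proof.
split=> [[/sat_cimp pq /sat_cimp qp] // | [pq qp]].
by split; apply/sat_cimp.
Qed.

Lemma sat_cbool fo so b : sat fo so (cbool b) <-> b.
Proof. by case: b => //=; split=> // /(_ I). Qed.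

Lemma sat_bigCAnd (T : finType) (f : T -> cmso F) fo so :
  sat fo so (bigCAnd f) <-> forall t, sat fo so (f t).
Proof.
suff satP s : sat fo so (foldr (fun t => CAnd (f t)) (CTrue F) s) <->
              {in s, forall t, sat fo so (f t)}.
  by rewrite /bigCAnd satP; split=> H t => [|_]; apply: H; rewrite ?mem_enum.
elim: s => [|t s IH] /=; first by split.
rewrite IH; split=> [[Ht Hs] u|H]; first by rewrite inE => /predU1P [->|/Hs].
by split=> [|u Hu]; apply: H; rewrite inE ?eqxx ?Hu ?orbT.
Qed.

Lemma sat_bigCOr (T : finType) (f : T -> cmso F) fo so :
  sat fo so (bigCOr f) <-> exists t, sat fo so (f t).
Proof.
suff satP s : sat fo so (foldr (fun t => COr (f t)) cfalse s) <->
              exists2 t, t \in s & sat fo so (f t).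
  by rewrite /bigCOr satP; split=> [[t _ Ht]|[t Ht]]; exists t; rewrite ?mem_enum.
elim: s => [|t s IH] /=; first by split=> [/(_ I)|[]].
rewrite IH; split=> [[Ht|[u Hu Hsu]]|[u]]; first by exists t; rewrite ?mem_head.
  by exists u; rewrite // inE Hu orbT.
by rewrite inE => /predU1P [->|Hu Hsu]; [left | right; exists u].
Qed.

Lemma sat_bigCOr_fun (I T : finType) (f : (I -> T) -> cmso F) fo so :
  sat fo so (bigCOr_fun f) <-> exists g : I -> T, sat fo so (f g).
Proof.
rewrite /bigCOr_fun sat_bigCOr; split=> [[g Hg]|[g Hg]]; first by exists g.
exists [ffun i => g i].
by rewrite (functional_extensionality _ _ (ffunE g)).
Qed.

Lemma sat_foldr_CExS (l : seq nat) p fo so :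
  sat fo so (foldr (@CExS F) p l) <->
  exists U : nat -> {set carrier M}, sat fo (fun x => if x \in l then U x else so x) p.
Proof.
elim: l so => [|x l IH] so /=.
  split=> [Hp|[U]]; first by exists so.
  by rewrite (functional_extensionality (fun y => _) so (fun y => erefl)).
split=> [[U0 /IH [U HU]]|[U HU]].
  exists (fun y => if y \in l then U y else U0).
  congr (sat _ _ _): HU; apply: functional_extensionality => y.
  by rewrite in_cons /upd; case: (y \in l); case: (y == x).
exists (U x); apply/IH; exists U.
congr (sat _ _ _): HU; apply: functional_extensionality => y.
by rewrite in_cons /upd; case: (y \in l); case: eqP => [->|]; rewrite ?orbT.
Qed.

Lemma sat_exsets (T : finType) (var : T -> nat) p fo so :
  sat fo so (exsets var p) <->
  exists U : T -> {set carrier M}, sat fo (upd_fam so var U) p.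
Proof.
rewrite /exsets sat_foldr_CExS; split=> [[U HU]|[U HU]].
  exists (U \o var); congr (sat _ _ _): HU; apply: functional_extensionality => x.
  rewrite /upd_fam; case: pickP => [t /eqP <-|fresh]; first by rewrite map_f ?mem_enum.
  by case: mapP => // [[t _ Ex]]; have := fresh t; rewrite Ex eqxx.
exists (upd_fam so var U); congr (sat _ _ _): HU; apply: functional_extensionality => x.
case: mapP => // fresh; rewrite /upd_fam; case: pickP => // t /eqP Ex.
by case: fresh; exists t; rewrite ?mem_enum.
Qed.

End DerivedConnectives.

(* Otherwise [simpl] unfolds [sat] through the derived connectives; below they
   are only handled through their [sat_*] lemmas. *)
Opaque cfalse cimp ciff cbool bigCAnd bigCOr bigCOr_fun exsets.

Section FiniteFieldCounting.
Variable F : finFieldType.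

(* Translating x |-> x + 1 permutes F, so summing gives #|F| * 1 = 0. *)
Lemma natr_card_finField : #|F|%:R = 0 :> F.
Proof.
have shift : \sum_(x : F) x = \sum_(x : F) (x + 1) := reindex_inj (addIr 1).
by apply: (@addrI _ (\sum_(x : F) x)); rewrite addr0 {2}shift big_split sumr_const.
Qed.

Lemma natr_eq_mod_card (x y : nat) : x = y %[mod #|F|] -> x%:R = y%:R :> F.
Proof.
move=> Exy; rewrite (divn_eq x #|F|) (divn_eq y #|F|) Exy !natrD !natrM.
by rewrite natr_card_finField !mulr0.
Qed.

Lemma sum_pair_counts (I : finType) (S : {set I}) (c g : I -> F) :
  \sum_(ae : F * F) ae.1 * ae.2 * #|[set j in S | (c j, g j) == ae]|%:R
  = \sum_(j in S) c j * g j.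
Proof.
rewrite (partition_big (fun j => (c j, g j)) predT) //=; apply: eq_bigr => ae _.
rewrite mulr_natr -sumr_const; apply: eq_big => j; rewrite inE //.
by case/andP=> _ /eqP <-.
Qed.

End FiniteFieldCounting.

Section DependenceFormula.
Variables (F : finFieldType) (k : nat).

(* Fresh set variables, above those of X and of the Y^i: [Cvar a] holds the
   class C_a, and [Zvar (a, e)] the columns of C_a with entry e in the current
   row. *)
Definition var_base : nat := (1 + k * #|F|)%N.
Definition Cvar (a : F) : nat := (var_base + enum_rank a)%N.
Definition Zvar (ae : F * F) : nat := (var_base + #|F| + enum_rank ae)%N.

Lemma var_Y_lt (i : 'I_k) (a : F) : (var_Y i a < var_base)%N.
Proof.
rewrite /var_Y /var_base -addnA ltn_add2l.
apply: leq_trans (_ : i * #|F| + #|F| <= k * #|F|)%N; first by rewrite ltn_add2l.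
by rewrite -mulSnr leq_mul2r ltn_ord orbT.
Qed.

Lemma Cvar_inj : injective Cvar.
Proof. by move=> a b /addnI /val_inj /enum_rank_inj. Qed.

Lemma Zvar_inj : injective Zvar.
Proof. by move=> a b /addnI /val_inj /enum_rank_inj. Qed.

Lemma Cvar_neq_X (a : F) : Cvar a != var_X.
Proof. by rewrite /Cvar /var_base. Qed.

Lemma Cvar_neq_Y (i : 'I_k) (b a : F) : Cvar a != var_Y i b.
Proof. by rewrite gtn_eqF // (leq_trans (var_Y_lt i b)) ?leq_addr. Qed.

Lemma Zvar_neq_Y (i : 'I_k) (b : F) (ae : F * F) : Zvar ae != var_Y i b.
Proof. by rewrite gtn_eqF // (leq_trans (var_Y_lt i b)) // /Zvar -addnA leq_addr. Qed.

Lemma Zvar_neq_Cvar (ae : F * F) (a : F) : Zvar ae != Cvar a.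
Proof.
by rewrite gtn_eqF // /Zvar /Cvar -addnA ltn_add2l (leq_trans (ltn_ord _)) ?leq_addr.
Qed.

(* First-order variable 0 holds the current row (bound in [crows]); variable 1
   is the locally quantified element. *)
Definition cpartition (X : nat) (C : F -> nat) : cmso F :=
  CAllV 1 (CAnd (ciff (CIn F 1 X) (bigCOr (fun a => CIn F 1 (C a))))
                (bigCAnd (fun a => bigCAnd (fun b => cimp (cbool F (a != b))
                   (CNot (CAnd (CIn F 1 (C a)) (CIn F 1 (C b)))))))).

Definition cnonzero (C : F -> nat) : cmso F :=
  CExV 1 (bigCOr (fun a => CAnd (cbool F (a != 0)) (CIn F 1 (C a)))).

Definition centry_sets (Z : F * F -> nat) (C : F -> nat) : cmso F :=
  CAllV 1 (bigCAnd (fun ae : F * F =>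
    ciff (CIn F 1 (Z ae)) (CAnd (CIn F 1 (C ae.1)) (CEntry ae.2 0 1)))).

Definition ccount (d : 'I_k -> F) (Z : F * F -> nat) : cmso F :=
  bigCOr_fun (fun t : F * F -> 'I_#|F| =>
    CAnd (bigCAnd (fun ae => CMod F (t ae) #|F| (Z ae)))
         (bigCOr_fun (fun w : 'I_k -> F =>
            CAnd (cbool F (\sum_(ae : F * F) ae.1 * ae.2 * (t ae)%:R
                           == \sum_(i < k) d i * w i))
                 (bigCAnd (fun i : 'I_k => CIn F 0 (var_Y i (w i))))))).

Definition crows (d : 'I_k -> F) (C : F -> nat) : cmso F :=
  CAllV 0 (cimp (CRow F 0)
    (exsets Zvar (CAnd (centry_sets Zvar C) (ccount d Zvar)))).

Definition Dep : cmso F :=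
  exsets Cvar (CAnd (cpartition var_X Cvar)
                    (CAnd (cnonzero Cvar) (bigCOr_fun (fun d => crows d Cvar)))).

Section Semantics.
Variable M : sigma_struct F.
Implicit Types (fo : nat -> carrier M) (so : nat -> {set carrier M}).

Lemma sat_cpartition X C fo so :
  sat fo so (cpartition X C) <->
  exists lab : carrier M -> F, forall a, so (C a) = [set u in so X | lab u == a].
Proof.
rewrite /cpartition /=; split=> [Hpart | [lab HC] u]; last first.
  split.
    apply/sat_ciff; rewrite /= sat_bigCOr; split=> [uX | [a /=]].
      by exists (lab u); rewrite /= HC inE uX eqxx.
    by rewrite HC inE => /andP [].
  apply/sat_bigCAnd => a; apply/sat_bigCAnd => b; apply/sat_cimp => /sat_cbool neq_ab /=.
  rewrite !HC !inE => [[/andP [_ /eqP la] /andP [_ /eqP lb]]].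
  by rewrite -la -lb eqxx in neq_ab.
have cover u : u \in so X <-> exists a, u \in so (C a).
  by have [/sat_ciff + _] := Hpart u; rewrite /= sat_bigCOr.
have disj u a b : a != b -> u \in so (C a) -> u \in so (C b) -> False.
  move=> neq_ab ua ub.
  have [_ /sat_bigCAnd /(_ a) /sat_bigCAnd /(_ b) /sat_cimp] := Hpart u.
  have nab : sat (upd fo 1 u) so (cbool F (a != b)) by apply/sat_cbool.
  by move/(_ nab); apply.
exists (fun u => odflt 0 [pick a | u \in so (C a)]) => a; apply/setP => u; rewrite inE.
case: pickP => [b ub | none] /=.
  apply/idP/andP => [ua | [_ /eqP <- //]]; split; first by apply/cover; exists a.
  by case: (eqVneq b a) => // neq_ba; case: (disj u b a neq_ba ub ua).
apply/idP/andP => [ua | [uX _]]; first by rewrite none in ua.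
by have [b ub] := (cover u).1 uX; rewrite none in ub.
Qed.

Lemma sat_cnonzero C fo so :
  sat fo so (cnonzero C) <-> exists a u, a != 0 /\ u \in so (C a).
Proof.
rewrite /cnonzero /=; split=> [[u /sat_bigCOr [a [/sat_cbool nz ua]]] | [a [u [nz ua]]]].
  by exists a, u; split; rewrite // /upd /= in ua.
by exists u; apply/sat_bigCOr; exists a; split; [apply/sat_cbool | rewrite /= /upd /=].
Qed.

Lemma sat_centry_sets Z C fo so :
  sat fo so (centry_sets Z C) <->
  forall ae, so (Z ae) = [set u in so (C ae.1) | s_Entry ae.2 (fo 0%N) u].
Proof.
rewrite /centry_sets /=; split=> [HZ ae | HZ u].
  apply/setP => u; rewrite inE.
  have /sat_bigCAnd /(_ ae) /sat_ciff [uZ Zu] := HZ u.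
  by apply/idP/andP => [/uZ | /Zu]; rewrite /= /upd /=.
apply/sat_bigCAnd => ae; apply/sat_ciff; rewrite /= /upd /= HZ inE.
by split=> /andP.
Qed.

Lemma sat_ccount d Z fo so :
  sat fo so (ccount d Z) <->
  exists2 w : 'I_k -> F, (forall i : 'I_k, fo 0%N \in so (var_Y i (w i)))
    & \sum_(ae : F * F) ae.1 * ae.2 * #|so (Z ae)|%:R = \sum_(i < k) d i * w i.
Proof.
rewrite /ccount sat_bigCOr_fun; split.
  case=> t [/sat_bigCAnd Ht /sat_bigCOr_fun [w [/sat_cbool /eqP Hw /sat_bigCAnd HY]]].
  exists w => //; rewrite -Hw; apply: eq_bigr => ae _; congr (_ * _).
  exact/natr_eq_mod_card/(Ht ae).
case=> w HY Hw; have card_gt0 : (0 < #|F|)%N by apply/card_gt0P; exists 0.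
exists (fun ae => Ordinal (ltn_pmod #|so (Z ae)| card_gt0)); split.
  by apply/sat_bigCAnd => ae /=; rewrite modn_mod.
apply/sat_bigCOr_fun; exists w; split; last exact/sat_bigCAnd.
apply/sat_cbool/eqP; rewrite -Hw; apply: eq_bigr => ae _; congr (_ * _).
by apply: natr_eq_mod_card; rewrite /= modn_mod.
Qed.

Lemma sat_crows d C fo so :
  (forall ae a, Zvar ae != C a) ->
  sat fo so (crows d C) <->
  forall x, s_R x -> exists2 w : 'I_k -> F, (forall i : 'I_k, x \in so (var_Y i (w i)))
    & \sum_(ae : F * F) ae.1 * ae.2 * #|[set u in so (C ae.1) | s_Entry ae.2 x u]|%:R
      = \sum_(i < k) d i * w i.
Proof.
move=> Z_fresh; have updE (U : F * F -> {set carrier M}) :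
    [/\ forall ae, upd_fam so Zvar U (Zvar ae) = U ae,
        forall a, upd_fam so Zvar U (C a) = so (C a)
      & forall (i : 'I_k) (b : F), upd_fam so Zvar U (var_Y i b) = so (var_Y i b)].
  split=> [ae | a | i b]; first exact: upd_fam_var Zvar_inj.
    by apply: upd_fam_fresh => ae; apply: Z_fresh.
  by apply: upd_fam_fresh => ae; apply: Zvar_neq_Y.
rewrite /crows /=; split=> [Hrows x Rx | Hrows x].
  have /sat_cimp /(_ Rx) /sat_exsets [U [/sat_centry_sets HZ /sat_ccount [w HY Hw]]]
    := Hrows x.
  have [UZ UC UY] := updE U.
  exists w => [i | ]; first by move: (HY i); rewrite UY /upd.
  by rewrite -Hw; apply: eq_bigr => ae _; rewrite HZ UC /upd /=.
apply/sat_cimp => Rx; have [w HY Hw] := Hrows x Rx.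
apply/sat_exsets; exists (fun ae => [set u in so (C ae.1) | s_Entry ae.2 x u]).
have [UZ UC UY] := updE (fun ae => [set u in so (C ae.1) | s_Entry ae.2 x u]).
split; first by apply/sat_centry_sets => ae; rewrite UZ UC /upd.
apply/sat_ccount; exists w => [i | ]; rewrite ?UY //.
by rewrite -Hw; apply: eq_bigr => ae _; rewrite UZ.
Qed.

Definition labelled_dep (X : {set carrier M}) (Y : 'I_k -> F -> {set carrier M}) : Prop :=
  exists lab : carrier M -> F,
    (exists2 u, u \in X & lab u != 0) /\
    exists d : 'I_k -> F, forall x, s_R x ->
      exists2 w : 'I_k -> F, (forall i : 'I_k, x \in Y i (w i))
        & \sum_(ae : F * F)
             ae.1 * ae.2 * #|[set u in X | (lab u == ae.1) && s_Entry ae.2 x u]|%:R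
          = \sum_(i < k) d i * w i.

Lemma sat_Dep fo so X Y :
  so var_X = X -> (forall (i : 'I_k) a, so (var_Y i a) = Y i a) ->
  sat fo so Dep <-> labelled_dep X Y.
Proof.
move=> HX HY; have updE (C : F -> {set carrier M}) :
    [/\ forall a, upd_fam so Cvar C (Cvar a) = C a,
        upd_fam so Cvar C var_X = X
      & forall (i : 'I_k) (b : F), upd_fam so Cvar C (var_Y i b) = Y i b].
  split=> [a | | i b]; first exact: upd_fam_var Cvar_inj.
    by rewrite upd_fam_fresh //; apply: Cvar_neq_X.
  by rewrite upd_fam_fresh // => a; apply: Cvar_neq_Y.
have entriesE (lab : carrier M -> F) (ae : F * F) x :
    [set u in [set v in X | lab v == ae.1] | s_Entry ae.2 x u]
    = [set u in X | (lab u == ae.1) && s_Entry ae.2 x u].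
  by apply/setP => u; rewrite !inE andbA.
have Zfresh : forall ae a, Zvar ae != Cvar a := Zvar_neq_Cvar.
rewrite /Dep sat_exsets; split.
  case=> C; have [UC UX UY] := updE C.
  case=> /sat_cpartition [lab HC] [/sat_cnonzero [a [u [nz ua]]]].
  move=> /sat_bigCOr_fun [d /(sat_crows _ _ _ Zfresh) Hrows].
  exists lab; split.
    by move: ua; rewrite HC UX inE => /andP [uX /eqP la]; exists u; rewrite ?la.
  exists d => x Rx; have [w Hw E] := Hrows x Rx; exists w => [i | ]; first by rewrite -UY.
  by rewrite -E; apply: eq_bigr => ae _; rewrite HC UX entriesE.
case=> lab [[u uX nz] [d Hrows]]; exists (fun a => [set u in X | lab u == a]).
have [UC UX UY] := updE (fun a => [set u in X | lab u == a]).
split; first by apply/sat_cpartition; exists lab => a; rewrite UC UX.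
split; first by apply/sat_cnonzero; exists (lab u), u; rewrite UC inE uX eqxx.
apply/sat_bigCOr_fun; exists d; apply/(sat_crows _ _ _ Zfresh) => x Rx.
have [w Hw E] := Hrows x Rx; exists w => [i | ]; first by rewrite UY.
by rewrite -E; apply: eq_bigr => ae _; rewrite UC entriesE.
Qed.

End Semantics.

End DependenceFormula.

Lemma dep_wrt_rowwise (F : fieldType) m n k (A : 'M[F]_(m, n)) (S : {set 'I_n})
    (v : 'I_k -> 'cV[F]_m) :
  dep_wrt A S v <->
  exists c : 'I_n -> F, (exists j, j \in S /\ c j != 0) /\
    exists d : 'I_k -> F,
      forall r, \sum_(j in S) c j * A r j = \sum_(i < k) d i * v i r 0.
Proof.
have colE (c : 'I_n -> F) r :
    (\sum_(j in S) c j *: col j A) r 0 = \sum_(j in S) c j * A r j.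
  by rewrite summxE; apply: eq_bigr => j _; rewrite !mxE.
have vecE (d : 'I_k -> F) r : (\sum_(i < k) d i *: v i) r 0 = \sum_(i < k) d i * v i r 0.
  by rewrite summxE; apply: eq_bigr => i _; rewrite !mxE.
have rowsE c d : \sum_(j in S) c j *: col j A = \sum_(i < k) d i *: v i <->
                 forall r, \sum_(j in S) c j * A r j = \sum_(i < k) d i * v i r 0.
  split=> [E r | E]; first by rewrite -colE -vecE E.
  by apply/matrixP => r z; rewrite ord1 colE vecE.
split=> [[c [nz [d /rowsE E]]] | [c [nz [d E]]]]; exists c; split=> //; exists d.
  exact: E.
exact/rowsE.
Qed.

Section MatrixStructure.
Variables (F : finFieldType) (m n : nat) (A : 'M[F]_(m, n)).

Lemma vvec_memE (Q : F -> {set 'I_m}) r a :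
  virtual_column Q -> (r \in Q a) = (vvec Q r 0 == a).
Proof.
case=> disj cover; rewrite mxE; case: pickP => [b rb | none] /=; last first.
  by have [c rc] := cover r; rewrite none in rc.
apply/idP/eqP => [ra | <- //]; case: (eqVneq b a) => // neq_ba.
by rewrite (disjointFr (disj _ _ neq_ba) rb) in ra.
Qed.

Lemma inl_row_set (T : {set 'I_m}) r : (inl r \in @row_set m n T) = (r \in T).
Proof. exact/mem_imset/inl_inj. Qed.

Lemma inr_col_set (S : {set 'I_n}) j : (inr j \in @col_set m n S) = (j \in S).
Proof. exact/mem_imset/inr_inj. Qed.

Lemma card_col_entries S (lab : 'I_m + 'I_n -> F) r ae :
  #|[set u in col_set S | (lab u == ae.1) && entry_rel A ae.2 (inl r) u]|
  = #|[set j in S | (lab (inr j), A r j) == ae]|.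
Proof.
rewrite -(card_imset _ (@inr_inj 'I_m 'I_n)); apply: eq_card => -[i | j]; rewrite !inE.
  by apply/idP/idP => [/and3P [] | /imsetP [x _ []]].
rewrite (inr_col_set S j) (mem_imset _ _ (@inr_inj 'I_m 'I_n)) inE.
by case: ae => a e; rewrite xpair_eqE.
Qed.

Lemma sum_col_entries S (lab : 'I_m + 'I_n -> F) r :
  \sum_(ae : F * F) ae.1 * ae.2
     * #|[set u in col_set S | (lab u == ae.1) && entry_rel A ae.2 (inl r) u]|%:R
  = \sum_(j in S) lab (inr j) * A r j.
Proof. by under eq_bigr do rewrite card_col_entries; apply: sum_pair_counts. Qed.

Lemma labelled_dep_SA k S (Q : 'I_k -> F -> {set 'I_m}) :
  (forall i, virtual_column (Q i)) ->
  @labelled_dep F k (SA A) (col_set S) (fun i a => row_set (Q i a)) <->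
  exists c : 'I_n -> F, (exists j, j \in S /\ c j != 0) /\
    exists d : 'I_k -> F,
      forall r, \sum_(j in S) c j * A r j = \sum_(i < k) d i * vvec (Q i) r 0.
Proof.
move=> HQ; split=> [[lab [[u uS nz] [d rows]]] | [c [[j [jS nz]] [d rows]]]].
  exists (fun j => lab (inr j)); split.
    by case/imsetP: uS => j jS uj; exists j; rewrite -uj.
  exists d => r; have [w wQ E] := rows (inl r) isT.
  rewrite -(sum_col_entries S lab r) [LHS]E; apply: eq_bigr => i _; congr (_ * _).
  by have := wQ i; rewrite inl_row_set vvec_memE // => /eqP ->.
exists (fun u => if u is inr j then c j else 0); split.
  by exists (inr j); rewrite ?inr_col_set.
exists d => -[r _ | //]; exists (fun i => vvec (Q i) r 0) => [i | ].
  by rewrite inl_row_set (vvec_memE _ _ (HQ i)).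
by rewrite sum_col_entries; apply: rows.
Qed.

End MatrixStructure.

Theorem lemma9 (F : finFieldType) (k : nat) :
  exists Dep : cmso F,
    forall (m n : nat) (A : 'M[F]_(m, n)) (S : {set 'I_n})
           (Q : 'I_k -> F -> {set 'I_m}),
      (forall i, virtual_column (Q i)) ->
      forall (fo : nat -> carrier (SA A))
             (so : nat -> {set carrier (SA A)}),
        so var_X = col_set S ->
        (forall (i : 'I_k) (a : F), so (var_Y i a) = row_set (Q i a)) ->
        (dep_wrt A S (fun i => vvec (Q i)) <-> sat fo so Dep).
Proof.
exists (Dep F k) => m n A S Q HQ fo so HX HY.
by rewrite dep_wrt_rowwise (sat_Dep fo HX HY) labelled_dep_SA.
Qed.
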